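(* Let $\mathcal{H}$ be a complex Hilbert space, let $W_1,W_2\in\mathcal{B}(\mathcal{H})$ be co-isometries and let $Q\in\mathcal{B}(\mathcal{H})$ be a unitary such that $W_2W_1=W_1W_2Q$. Then there exist a Hilbert space $\mathcal{K}\supseteq\mathcal{H}$ and unitaries $\overline{Q},U_1,U_2\in\mathcal{B}(\mathcal{K})$, with $\mathcal{H}$ reducing $\overline{Q}$ and $\overline{Q}|_{\mathcal{H}}=Q$, such that (i) $U_2U_1=U_1U_2\overline{Q}$; and (ii) $U_i$ is a lifting of $W_i$ for $i=1,2$, so that $W_1^nW_2^m=P_{\mathcal{H}}U_1^nU_2^m|_{\mathcal{H}}$ and $W_2^nW_1^m=P_{\mathcal{H}}U_2^nU_1^m|_{\mathcal{H}}$ for all integers $n,m\geq 0$. In fact, given any $q\in\mathbb{T}$, one can choose $\overline{Q}=Q\oplus qI_{\mathcal{K}\ominus\mathcal{H}}$.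
   Context: For $\mathcal{H}\subseteq\mathcal{K}$, $S\in\mathcal{B}(\mathcal{K})$ is a lifting of $T\in\mathcal{B}(\mathcal{H})$ if $S(\mathcal{H}^\perp)\subseteq\mathcal{H}^\perp$ and $T=P_{\mathcal{H}}S|_{\mathcal{H}}$ (equivalently $S^*|_{\mathcal{H}}=T^*$). A co-isometry is $W$ with $WW^*=I$. $\mathbb{T}$ is the unit circle; $P_{\mathcal{H}}$ the orthogonal projection onto $\mathcal{H}$. *)

From mathcomp Require Import all_boot all_order all_algebra.
From mathcomp Require Import reals complex.
Set Implicit Arguments. Unset Strict Implicit. Unset Printing Implicit Defensive.
Import Order.TTheory GRing.Theory Num.Theory.
Local Open Scope ring_scope.

(* Cauchy / convergence
   are written with squared norms <x,x> (equivalent, eps <-> eps^2). *)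
Record hilbert (C : numClosedFieldType) := Hilbert {
  hcarrier :> lmodType C;
  hinner : hcarrier -> hcarrier -> C;
  hinnerDl : forall (a : C) (x y z : hcarrier),
      hinner (a *: x + y) z = a * hinner x z + hinner y z;
  hinnerC : forall x y : hcarrier, hinner y x = (hinner x y)^*;
  hinner_ge0 : forall x : hcarrier, 0 <= hinner x x;
  hinner_eq0 : forall x : hcarrier, hinner x x = 0 -> x = 0;
  hcomplete : forall u : nat -> hcarrier,
      (forall eps : C, 0 < eps -> exists N : nat, forall m n : nat,
          (N <= m)%N -> (N <= n)%N -> hinner (u m - u n) (u m - u n) < eps) ->
      exists l : hcarrier, forall eps : C, 0 < eps -> exists N : nat,
          forall n : nat, (N <= n)%N -> hinner (u n - l) (u n - l) < eps
}.
Arguments hinner {C} h _ _.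

Section Ops.
Variable C : numClosedFieldType.

Definition is_bounded_op (H : hilbert C) (T : H -> H) : Prop :=
  linear T /\
  exists M : C, 0 <= M /\ forall x : H, hinner H (T x) (T x) <= M * hinner H x x.

Definition is_adjoint (H : hilbert C) (T S : H -> H) : Prop :=
  forall x y : H, hinner H (T x) y = hinner H x (S y).

Definition coisometry (H : hilbert C) (W : H -> H) : Prop :=
  exists S : H -> H, is_adjoint W S /\ forall x : H, W (S x) = x.

Definition unitary (H : hilbert C) (U : H -> H) : Prop :=
  exists S : H -> H, is_adjoint U S /\
    (forall x : H, U (S x) = x) /\ (forall x : H, S (U x) = x).

Definition hembedding (H K : hilbert C) (J : H -> K) : Prop :=
  linear J /\ forall x y : H, hinner K (J x) (J y) = hinner H x y.

Definition horth (H K : hilbert C) (J : H -> K) (z : K) : Prop :=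
  forall x : H, hinner K z (J x) = 0.

(* S in B(K) is a lifting of T in B(H) (H identified with J(H)):
   S(H^perp) ⊆ H^perp and T = P_H S|_H, the latter written as
   <S (J x), J y>_K = <T x, y>_H for all x y. *)
Definition lifting (H K : hilbert C) (J : H -> K) (S : K -> K) (T : H -> H) : Prop :=
  (forall z : K, horth J z -> horth J (S z)) /\
  (forall x y : H, hinner K (S (J x)) (J y) = hinner H (T x) y).

End Ops.

(* A co-isometry W on H with adjoint S has a canonical unitary extension: the
   bounded sequences (h_n) with W h_(n+1) = h_n, with inner product
   lim <h_n, k_n>, form a Hilbert space K containing H via x |-> (S^n x)_n, and
   the shift U (h_n) = (W h_0, h_0, h_1, ...) is a unitary lifting of W.  If
   moreover W A = A W Q with A a co-isometry and Q unitary, put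
   T = (Q ⊕ q)^-1 U^-1 on K; then A' h = (A (T^n h)_0)_n is a co-isometric
   lifting of A with U A' = A' U (Q ⊕ q), unitary when A is.  Applied to
   (W1, W2, Q^-1, q^* ) this gives U1' unitary and W2' lifting W2 with
   W2' U1' = U1' W2' (Q ⊕ q); applied again to (W2', U1', Q ⊕ q, q) it gives
   the unitaries U2 and U1 with U2 U1 = U1 U2 (Q ⊕ q). *)

From HB Require Import structures.
From mathcomp Require Import all_boot all_order all_algebra.
From mathcomp Require Import reals complex.
From mathcomp Require Import boolp classical_sets functions topology normedtype sequences.
From mathcomp Require Import ring lra.
Import Order.TTheory GRing.Theory Num.Theory numFieldTopology.Exports numFieldNormedType.Exports.
Set Implicit Arguments. Unset Strict Implicit. Unset Printing Implicit Defensive.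
Local Open Scope ring_scope.
Local Open Scope classical_set_scope.

(* Real and imaginary parts as elements of [R], unlike ssrnum's ['Re z : R[i]]. *)
Local Notation Re := (@complex.Re _).
Local Notation Im := (@complex.Im _).

Section ComplexParts.
Variable R : rcfType.
Implicit Types x y : R[i].

Lemma ReD x y : Re (x + y) = Re x + Re y. Proof. by case: x; case: y. Qed.
Lemma ImD x y : Im (x + y) = Im x + Im y. Proof. by case: x; case: y. Qed.
Lemma ReN x : Re (- x) = - Re x. Proof. by case: x. Qed.
Lemma ReM x y : Re (x * y) = Re x * Re y - Im x * Im y. Proof. by case: x; case: y. Qed.
Lemma ImM x y : Im (x * y) = Re x * Im y + Im x * Re y.
Proof. by case: x => a b; case: y => c d /=; rewrite addrC. Qed.
Lemma ReJ x : Re x^* = Re x. Proof. by case: x. Qed.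
Lemma ImJ x : Im x^* = - Im x. Proof. by case: x. Qed.

Lemma complexP x y : Re x = Re y -> Im x = Im y -> x = y.
Proof. by case: x => a b; case: y => c d /= -> ->. Qed.

Lemma ge0_complexE x : (0 <= x) = (Im x == 0) && (0 <= Re x).
Proof. by rewrite lecE /= eq_sym. Qed.

Lemma gt0_complexE x : (0 < x) = (Im x == 0) && (0 < Re x).
Proof. by rewrite ltcE /= eq_sym. Qed.

Lemma mulcJ x : x * x^* = (Re x ^+ 2 + Im x ^+ 2)%:C%C.
Proof. by case: x => a b; apply: complexP => /=; rewrite ?expr2; lra. Qed.

Lemma normc1_ReIm x : `|x| = 1 -> Re x ^+ 2 + Im x ^+ 2 = 1.
Proof. by move=> x1; apply: complexI; rewrite add_Re2_Im2 x1 expr1n. Qed.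

Lemma normc1_conjM x : `|x| = 1 -> x^* * x = 1.
Proof. by move=> x1; rewrite -normCKC x1 expr1n. Qed.

End ComplexParts.

Section ComplexConvergence.
Variable R : realType.
Implicit Types (u v : nat -> R[i]) (l m : R[i]).

(* [R[i]] has no canonical topology: a complex sequence converges when its real
   and imaginary parts do. *)
Definition ccvg u l :=
  (fun n => Re (u n)) @ \oo --> Re l /\ (fun n => Im (u n)) @ \oo --> Im l.

Definition climn u : R[i] := Complex (limn (fun n => Re (u n))) (limn (fun n => Im (u n))).

Lemma eq_ccvg u v l : u =1 v -> ccvg u l = ccvg v l.
Proof. by move=> /funext ->. Qed.

Lemma climn_eq u l : ccvg u l -> climn u = l.
Proof.
by case=> /(cvg_lim (@Rhausdorff R)) hRe /(cvg_lim (@Rhausdorff R)) hIm; apply: complexP.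
Qed.

Lemma ccvg_cst l : ccvg (fun => l) l.
Proof. by split; apply: cvg_cst. Qed.

Lemma ccvg_real (r : nat -> R) (a : R) : r @ \oo --> a -> ccvg (fun n => (r n)%:C%C) a%:C%C.
Proof. by move=> h; split => /=; [exact: h | exact: (cvg_cst (0 : R))]. Qed.

Lemma ccvgD u v l m : ccvg u l -> ccvg v m -> ccvg (u \+ v) (l + m).
Proof.
case=> uRe uIm [vRe vIm]; split.
  by rewrite ReD; under eq_cvg do rewrite ReD; apply: cvgD.
by rewrite ImD; under eq_cvg do rewrite ImD; apply: cvgD.
Qed.

Lemma ccvgMl a u l : ccvg u l -> ccvg (fun n => a * u n) (a * l).
Proof.
case=> uRe uIm; split.
  rewrite ReM; under eq_cvg do rewrite ReM.
  by apply: cvgB; apply: cvgM => //; apply: cvg_cst.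
rewrite ImM; under eq_cvg do rewrite ImM.
by apply: cvgD; apply: cvgM => //; apply: cvg_cst.
Qed.

Lemma ccvgJ u l : ccvg u l -> ccvg (fun n => (u n)^*) l^*.
Proof.
case=> uRe uIm; split; first by rewrite ReJ; under eq_cvg do rewrite ReJ.
by rewrite ImJ; under eq_cvg do rewrite ImJ; apply: cvgN.
Qed.

Lemma ccvg_shiftS u l : ccvg (fun n => u n.+1) l = ccvg u l.
Proof. by rewrite /ccvg (cvg_shiftS (fun n => Re (u n))) (cvg_shiftS (fun n => Im (u n))). Qed.

End ComplexConvergence.

Section LinearMaps.
Variables (C : ringType) (U V : lmodType C) (f : U -> V).
Hypothesis fL : linear f.

Lemma lin0 : f 0 = 0.
Proof.
have := fL 1 0 0; rewrite scale1r !addr0 scale1r => h.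
by apply: (addrI (f 0)); rewrite addr0 -h.
Qed.
Lemma linD x y : f (x + y) = f x + f y.
Proof. by rewrite -[x in LHS]scale1r fL scale1r. Qed.
Lemma linZ a x : f (a *: x) = a *: f x.
Proof. by rewrite -[a *: x]addr0 fL lin0 addr0. Qed.
Lemma linN x : f (- x) = - f x.
Proof. by rewrite -scaleN1r linZ scaleN1r. Qed.
Lemma linB x y : f (x - y) = f x - f y.
Proof. by rewrite linD linN. Qed.

End LinearMaps.

Lemma linear_comp (C : ringType) (U V X : lmodType C) (f : V -> X) (g : U -> V) :
  linear f -> linear g -> linear (f \o g).
Proof. by move=> fL gL a x y; rewrite /= gL fL. Qed.

Lemma iter_linear (C : ringType) (V : lmodType C) (f : V -> V) n :
  linear f -> linear (iter n f).
Proof. by move=> fL a x y; elim: n => [//|n ih]; rewrite !iterS ih linD // linZ. Qed.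

Section InnerProduct.
Variables (R : realType) (H : hilbert R[i]).
Local Notation "<< x , y >>" := (hinner H x y).
Implicit Types x y z : H.

Lemma ipDl x y z : << x + y, z >> = << x, z >> + << y, z >>.
Proof. by have := hinnerDl 1 x y z; rewrite scale1r mul1r. Qed.
Lemma ip0l z : << 0, z >> = 0.
Proof. by apply: (addrI << 0, z >>); rewrite -ipDl !addr0. Qed.
Lemma ipZl a x z : << a *: x, z >> = a * << x, z >>.
Proof. by have := hinnerDl a x 0 z; rewrite !addr0 ip0l addr0. Qed.
Lemma ipNl x z : << - x, z >> = - << x, z >>.
Proof. by rewrite -scaleN1r ipZl mulN1r. Qed.
Lemma ipBl x y z : << x - y, z >> = << x, z >> - << y, z >>.
Proof. by rewrite ipDl ipNl. Qed.

Lemma ipC x y : << y, x >> = << x, y >>^*.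
Proof. exact: hinnerC. Qed.

Lemma ipDr x y z : << x, y + z >> = << x, y >> + << x, z >>.
Proof. by rewrite ipC ipDl rmorphD /= -!ipC. Qed.
Lemma ipZr a x y : << x, a *: y >> = a^* * << x, y >>.
Proof. by rewrite ipC ipZl rmorphM /= -ipC. Qed.
Lemma ip0r x : << x, 0 >> = 0.
Proof. by rewrite ipC ip0l conjC0. Qed.
Lemma ipNr x y : << x, - y >> = - << x, y >>.
Proof. by rewrite ipC ipNl rmorphN /= -ipC. Qed.
Lemma ipBr x y z : << x, y - z >> = << x, y >> - << x, z >>.
Proof. by rewrite ipDr ipNr. Qed.

Lemma ipl_inj x y : (forall z, << x, z >> = << y, z >>) -> x = y.
Proof. by move=> h; apply/subr0_eq/hinner_eq0; rewrite ipBl h subrr. Qed.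
Lemma ipr_inj x y : (forall z, << z, x >> = << z, y >>) -> x = y.
Proof. by move=> h; apply: ipl_inj => z; rewrite ipC h -ipC. Qed.

Definition sqnorm x : R := Re << x, x >>.

Lemma ipxx x : << x, x >> = (sqnorm x)%:C%C.
Proof. by have /[!ge0_complexE] /andP[/eqP Im0 _] := hinner_ge0 x; apply: complexP. Qed.

Lemma sqnorm_ge0 x : 0 <= sqnorm x.
Proof. by have /[!ge0_complexE] /andP[] := hinner_ge0 x. Qed.
Lemma sqnorm_eq0 x : sqnorm x = 0 -> x = 0.
Proof. by move=> h; apply: hinner_eq0; rewrite ipxx h. Qed.
Lemma sqnorm0 : sqnorm 0 = 0.
Proof. by rewrite /sqnorm ip0l. Qed.

Lemma Re_ipC x y : Re << y, x >> = Re << x, y >>.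
Proof. by rewrite ipC ReJ. Qed.

Lemma sqnormD x y : sqnorm (x + y) = sqnorm x + sqnorm y + 2 * Re << x, y >>.
Proof. by rewrite /sqnorm ipDl !ipDr !ReD (Re_ipC x y); lra. Qed.
Lemma sqnormN x : sqnorm (- x) = sqnorm x.
Proof. by rewrite /sqnorm ipNl ipNr opprK. Qed.
Lemma sqnormB x y : sqnorm (x - y) = sqnorm x + sqnorm y - 2 * Re << x, y >>.
Proof. by rewrite sqnormD sqnormN ipNr ReN; lra. Qed.
Lemma sqnormBC x y : sqnorm (x - y) = sqnorm (y - x).
Proof. by rewrite -sqnormN opprB. Qed.
Lemma sqnormZ a x : sqnorm (a *: x) = (Re a ^+ 2 + Im a ^+ 2) * sqnorm x.
Proof. by rewrite /sqnorm ipZl ipZr ipxx mulrA mulcJ ReM /=; lra. Qed.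

Lemma sqnormD_le x y : sqnorm (x + y) <= 2 * sqnorm x + 2 * sqnorm y.
Proof. have := sqnorm_ge0 (x - y); rewrite sqnormB sqnormD; lra. Qed.
Lemma sqnormB_le x y z : sqnorm (x - z) <= 2 * sqnorm (x - y) + 2 * sqnorm (y - z).
Proof. by have := sqnormD_le (x - y) (y - z); rewrite addrA subrK. Qed.

Lemma Re_ipi x y : Re << x, 'i%C *: y >> = Im << x, y >>.
Proof. by rewrite ipZr ReM ReJ ImJ /=; lra. Qed.
Lemma sqnormi y : sqnorm ('i%C *: y) = sqnorm y.
Proof. by rewrite sqnormZ /= expr0n expr1n add0r mul1r. Qed.

Lemma Re_ip_polarization x y : Re << x, y >> = 4^-1 * (sqnorm (x + y) - sqnorm (x - y)).
Proof. by rewrite sqnormD sqnormB; field. Qed.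
Lemma Im_ip_polarization x y :
  Im << x, y >> = 4^-1 * (sqnorm (x + 'i%C *: y) - sqnorm (x - 'i%C *: y)).
Proof. by rewrite -Re_ipi Re_ip_polarization. Qed.

Lemma Re_ip_CauchySchwarz x y : Re << x, y >> ^+ 2 <= sqnorm x * sqnorm y.
Proof.
have [->|y0] := eqVneq y 0; first by rewrite ip0r sqnorm0 /= expr0n mulr0.
have ny0 : 0 < sqnorm y.
  by rewrite lt_def sqnorm_ge0 andbT; apply: contra_neq y0 => /sqnorm_eq0.
set a := sqnorm x; set b := sqnorm y; set c := Re << x, y >>.
(* [sqnorm (b x - c y) = b (a b - c ^+ 2)] for the real scalars [b] and [c]. *)
have := sqnorm_ge0 (b%:C%C *: x - c%:C%C *: y).
rewrite sqnormB !sqnormZ ipZl ipZr ReM /= ReM /= -/a -/b -/c; nra.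
Qed.

End InnerProduct.

Section HilbertConvergence.
Variables (R : realType) (H : hilbert R[i]).
Local Notation "<< x , y >>" := (hinner H x y).
Implicit Types (x y l : H) (v : nat -> H).

Definition hcvg v l := (fun n => sqnorm (v n - l)) @ \oo --> 0.

Lemma hcvg_unique v l l' : hcvg v l -> hcvg v l' -> l = l'.
Proof.
move=> hl hl'; apply/subr0_eq/sqnorm_eq0.
have bound0 : (fun n => 2 * sqnorm (v n - l) + 2 * sqnorm (v n - l')) @ \oo --> 0.
  by rewrite -(addr0 0) -{1 2}(mulr0 (2 : R)); apply: cvgD; apply: cvgM => //; exact: cvg_cst.
have : (fun=> sqnorm (l - l')) @ \oo --> 0.
  apply: (squeeze_cvgr _ (cvg_cst (0 : R)) bound0); apply: nearW => n.
  by rewrite sqnorm_ge0 /= (sqnormBC (v n) l) sqnormB_le.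
by move/(cvg_lim (@Rhausdorff R)); rewrite lim_cst.
Qed.

Lemma Re_ip_cvg0 x (y : nat -> H) : (fun n => sqnorm (y n)) @ \oo --> 0 ->
  (fun n => Re << x, y n >>) @ \oo --> 0.
Proof.
move=> y0; have xy0 : (fun n => sqnorm x * sqnorm (y n)) @ \oo --> 0.
  by rewrite -(mulr0 (sqnorm x)); apply: cvgM => //; exact: cvg_cst.
apply/cvgrPdist_lt => e e0; near=> n.
have : `|0 - sqnorm x * sqnorm (y n)| < e ^+ 2.
  by near: n; apply: cvgr_dist_lt => //; rewrite exprn_gt0.
rewrite !sub0r !normrN !ltr_norml => /andP[_ lt_e2].
have := Re_ip_CauchySchwarz x (y n) => CS; apply/andP; split; nra.
Unshelve. all: by end_near.
Qed.

Lemma hcvg_ipr x v l : hcvg v l -> ccvg (fun n => << x, v n >>) << x, l >>.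
Proof.
move=> vl; have ipB n : << x, v n >> = << x, l >> + << x, v n - l >>.
  by rewrite ipBr addrC subrK.
have Im_cvg0 : (fun n => Im << x, v n - l >>) @ \oo --> 0.
  under eq_cvg do rewrite -Re_ipi; apply: Re_ip_cvg0.
  by under eq_cvg do rewrite sqnormi.
split.
  rewrite -[X in _ --> X]addr0; under eq_cvg do rewrite ipB ReD.
  by apply: cvgD; [exact: cvg_cst | exact: Re_ip_cvg0].
rewrite -[X in _ --> X]addr0; under eq_cvg do rewrite ipB ImD.
by apply: cvgD; [exact: cvg_cst | exact: Im_cvg0].
Qed.

Lemma hcvgP v l : hcvg v l ->
  forall e : R, 0 < e -> exists N, forall n, (N <= n)%N -> sqnorm (v n - l) < e.
Proof.
move=> vl e e0; have [N _ vN] := cvgr_dist_lt _ _ vl _ e0; exists N => n Nn.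
by have := vN n Nn; rewrite /= sub0r normrN ger0_norm ?sqnorm_ge0.
Qed.

Lemma hcvg_cauchy v :
  (forall e : R, 0 < e -> exists N, forall m n, (N <= m)%N -> (N <= n)%N ->
     sqnorm (v m - v n) < e) ->
  exists l, hcvg v l.
Proof.
move=> vC; have [l vl] : exists l, forall eps : R[i], 0 < eps -> exists N, forall n,
    (N <= n)%N -> << v n - l, v n - l >> < eps.
  apply: hcomplete => eps; rewrite gt0_complexE => /andP[/eqP Im0 Re0].
  have [N vN] := vC _ Re0; exists N => m n Nm Nn.
  by rewrite ipxx ltcE Im0 /= eqxx vN.
exists l; apply/cvgrPdist_lt => e e0.
have /vl [N vN] : 0 < e%:C%C :> R[i] by rewrite ltcR.
exists N => // n /= Nn; rewrite sub0r normrN ger0_norm ?sqnorm_ge0 //.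
by have := vN n Nn; rewrite ipxx ltcR.
Qed.

End HilbertConvergence.

Lemma hcvg_bounded (R : realType) (H K : hilbert R[i]) (T : H -> K) (M : R) v l :
  linear T -> (forall x, sqnorm (T x) <= M * sqnorm x) ->
  hcvg v l -> hcvg (fun n => T (v n)) (T l).
Proof.
move=> TL TM vl; have : (fun n => M * sqnorm (v n - l)) @ \oo --> 0.
  by rewrite -(mulr0 M); apply: cvgM => //; exact: cvg_cst.
apply: squeeze_cvgr (cvg_cst (0 : R)); apply: nearW => n.
by rewrite sqnorm_ge0 -linB // TM.
Qed.

(** * Co-isometric and unitary pairs *)

Section Adjoints.
Variable R : realType.
Implicit Types H K : hilbert R[i].

Definition adjoint H K (T : H -> K) (S : K -> H) :=
  forall x y, hinner K (T x) y = hinner H x (S y).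

Definition coisometric H K (W : H -> K) (S : K -> H) := adjoint W S /\ cancel S W.

Definition unitary_pair H (U V : H -> H) := adjoint U V /\ cancel V U /\ cancel U V.

Lemma adjoint_sym H K (T : H -> K) S : adjoint T S -> adjoint S T.
Proof. by move=> TS y x; rewrite ipC -TS -ipC. Qed.

Lemma adjoint_linear H K (T : H -> K) S : adjoint T S -> linear T.
Proof. by move=> TS a x y; apply: ipl_inj => z; rewrite TS ipDl ipZl ipDl ipZl !TS. Qed.

Lemma adjoint_iter H (T S : H -> H) n : adjoint T S -> adjoint (iter n T) (iter n S).
Proof. by move=> TS; elim: n => [//|n ih] x y; rewrite iterS TS ih -iterSr. Qed.

Lemma adjoint_comp H1 H2 H3 (T1 : H1 -> H2) S1 (T2 : H2 -> H3) S2 :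
  adjoint T1 S1 -> adjoint T2 S2 -> adjoint (T2 \o T1) (S1 \o S2).
Proof. by move=> TS1 TS2 x y; rewrite /= TS2 TS1. Qed.

Lemma unitary_pair_sym H (U V : H -> H) : unitary_pair U V -> unitary_pair V U.
Proof. by case=> UV [VU UV']; do ![split] => //; apply: adjoint_sym. Qed.

Lemma unitary_pair_coisometric H (U V : H -> H) : unitary_pair U V -> coisometric U V.
Proof. by case=> UV []. Qed.

End Adjoints.

Section Coisometric.
Variables (R : realType) (H K : hilbert R[i]) (W : H -> K) (S : K -> H).
Hypothesis WS : coisometric W S.

Lemma coisometric_adjoint : adjoint W S. Proof. by case: WS. Qed.
Lemma coisometricK : cancel S W. Proof. by case: WS. Qed.
Lemma coisometric_linear : linear W. Proof. exact: adjoint_linear coisometric_adjoint. Qed.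
Lemma coisometric_linear_adj : linear S.
Proof. exact/adjoint_linear/adjoint_sym/coisometric_adjoint. Qed.

Lemma coisometric_ip x y : hinner H (S x) (S y) = hinner K x y.
Proof. by rewrite -coisometric_adjoint coisometricK. Qed.

Lemma sqnorm_coisometric_adj x : sqnorm (S x) = sqnorm x.
Proof. by rewrite /sqnorm coisometric_ip. Qed.

Lemma coisometric_Pythagoras x : sqnorm x = sqnorm (W x) + sqnorm (x - S (W x)).
Proof.
have orth : hinner H (S (W x)) (x - S (W x)) = 0.
  by rewrite (adjoint_sym coisometric_adjoint) (linB coisometric_linear) coisometricK subrr ip0r.
have := sqnormD (S (W x)) (x - S (W x)).
by rewrite addrC subrK orth sqnorm_coisometric_adj /= mulr0 addr0.
Qed.

Lemma sqnorm_coisometric_le x : sqnorm (W x) <= sqnorm x.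
Proof. by rewrite [leRHS]coisometric_Pythagoras lerDl sqnorm_ge0. Qed.

Lemma sqnorm_coisometric_defect x : sqnorm (x - S (W x)) = sqnorm x - sqnorm (W x).
Proof. have := coisometric_Pythagoras x; lra. Qed.

Lemma coisometric_orthE z : horth S z <-> W z = 0.
Proof.
split=> [z0 | Wz0 x]; last by rewrite -coisometric_adjoint Wz0 ip0l.
by apply: ipl_inj => y; rewrite coisometric_adjoint z0 ip0l.
Qed.

End Coisometric.

Lemma coisometric_iter (R : realType) (H : hilbert R[i]) (W S : H -> H) n :
  coisometric W S -> coisometric (iter n W) (iter n S).
Proof.
case=> WS SW; split; first exact: adjoint_iter.
by elim: n => [//|n ih] x; rewrite iterSr iterS SW ih.
Qed.

Lemma coisometric_comp (R : realType) (H1 H2 H3 : hilbert R[i])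
    (W1 : H2 -> H1) S1 (W2 : H3 -> H2) S2 :
  coisometric W1 S1 -> coisometric W2 S2 -> coisometric (W1 \o W2) (S2 \o S1).
Proof.
by case=> WS1 SW1 [WS2 SW2]; split; [exact: adjoint_comp | move=> x /=; rewrite SW2 SW1].
Qed.

Section OplusScalar.
Variables (R : realType) (H K : hilbert R[i]) (Js : K -> H) (J : H -> K).
Hypothesis JsJ : coisometric Js J.

Definition oplus_scalar (Q : H -> H) (q : R[i]) (k : K) : K :=
  J (Q (Js k)) + q *: (k - J (Js k)).

Let JL : linear J := coisometric_linear_adj JsJ.
Let JsL : linear Js := coisometric_linear JsJ.

Lemma Js_orth_part k : Js (k - J (Js k)) = 0.
Proof. by rewrite (linB JsL) (coisometricK JsJ) subrr. Qed.

Lemma Js_oplus_scalar Q q k : Js (oplus_scalar Q q k) = Q (Js k).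
Proof.
by rewrite /oplus_scalar (linD JsL) (linZ JsL) Js_orth_part scaler0 addr0 (coisometricK JsJ).
Qed.

Lemma oplus_scalar_J Q q x : oplus_scalar Q q (J x) = J (Q x).
Proof. by rewrite /oplus_scalar (coisometricK JsJ) subrr scaler0 addr0. Qed.

Lemma oplus_scalar_orth Q q z : linear Q -> Js z = 0 -> oplus_scalar Q q z = q *: z.
Proof. by move=> QL z0; rewrite /oplus_scalar z0 (lin0 QL) (lin0 JL) subr0 add0r. Qed.

Lemma oplus_scalarK Q Q' q q' : cancel Q' Q -> q * q' = 1 ->
  cancel (oplus_scalar Q' q') (oplus_scalar Q q).
Proof.
move=> QQ' qq' k; rewrite {1}/oplus_scalar Js_oplus_scalar QQ' /oplus_scalar.
by rewrite addrAC subrr add0r scalerA qq' scale1r addrC subrK.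
Qed.

Lemma oplus_scalar_adjoint Q Qs q : adjoint Q Qs ->
  adjoint (oplus_scalar Q q) (oplus_scalar Qs q^*).
Proof.
have [JsJadj _] := JsJ; have JJsadj := adjoint_sym JsJadj.
move=> QQs k k'; rewrite /oplus_scalar ipDl ipZl ipDr ipZr conjCK JJsadj QQs -JsJadj.
by rewrite ipBl ipBr JJsadj -JsJadj.
Qed.

Lemma unitary_pair_oplus_scalar Q Qs q : unitary_pair Q Qs -> `|q| = 1 ->
  unitary_pair (oplus_scalar Q q) (oplus_scalar Qs q^*).
Proof.
case=> QQs [QsQ QQs'] /normc1_conjM qq; split; first exact: oplus_scalar_adjoint.
by split; apply: oplus_scalarK => //; rewrite mulrC.
Qed.

End OplusScalar.

Lemma oplus_scalar_comp (R : realType) (H K L : hilbert R[i])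
    (Js1 : K -> H) J1 (Js2 : L -> K) J2 (Q : H -> H) q k :
  coisometric Js1 J1 -> coisometric Js2 J2 ->
  oplus_scalar Js2 J2 (oplus_scalar Js1 J1 Q q) q k = oplus_scalar (Js1 \o Js2) (J2 \o J1) Q q k.
Proof.
move=> JsJ1 JsJ2; have J2L := coisometric_linear_adj JsJ2.
rewrite /oplus_scalar /= (linD J2L) (linZ J2L) (linB J2L) -addrA -scalerDr.
by congr (_ + _ *: _); rewrite addrC addrA subrK.
Qed.

Section UnitaryPair.
Variables (R : realType) (H : hilbert R[i]) (U V : H -> H).
Hypothesis UV : unitary_pair U V.

Lemma unitary_pair_iter n : unitary_pair (iter n U) (iter n V).
Proof.
have [UVadj [VU UV']] := UV; split; first exact: adjoint_iter.
by split; [exact: (coisometricK (coisometric_iter n (conj UVadj VU))) |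
           exact: (coisometricK (coisometric_iter n (conj (adjoint_sym UVadj) UV')))].
Qed.

Lemma sqnorm_unitary_pair x : sqnorm (U x) = sqnorm x.
Proof. exact: (sqnorm_coisometric_adj (unitary_pair_coisometric (unitary_pair_sym UV))). Qed.

Lemma unitary_pair_linear : linear U.
Proof. exact: coisometric_linear (unitary_pair_coisometric UV). Qed.

Lemma unitary_pair_bounded : is_bounded_op U.
Proof.
split; first exact: unitary_pair_linear.
by exists 1; split => // x; rewrite mul1r !ipxx sqnorm_unitary_pair.
Qed.

Lemma unitary_pair_comp (U' V' : H -> H) :
  unitary_pair U' V' -> unitary_pair (U' \o U) (V \o V').
Proof.
have [UVadj [VU UV']] := UV; case=> UVadj' [VU' UV''].
by split; [exact: adjoint_comp | split => x /=; rewrite ?VU' ?VU ?UV' ?UV''].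
Qed.

End UnitaryPair.

(** * The unitary extension of a co-isometry *)

Section InverseLimit.
Variables (R : realType) (H : hilbert R[i]) (W S : H -> H).
Hypothesis WS : coisometric W S.
Local Notation "<< x , y >>" := (hinner H x y).

Let WL : linear W := coisometric_linear WS.

Definition compatible_bounded : {pred nat -> H} :=
  mem [set u : nat -> H | (forall n, W (u n.+1) = u n) /\
                          exists M : R, forall n, sqnorm (u n) <= M].

Lemma compatible_boundedP u :
  (forall n, W (u n.+1) = u n) -> (exists M : R, forall n, sqnorm (u n) <= M) ->
  u \in compatible_bounded.
Proof. by move=> uW uM; apply/mem_set. Qed.

Lemma compatible_bounded_submod_closed : submod_closed compatible_bounded.
Proof.
split; first by apply: compatible_boundedP => [n|]; [exact: lin0 | exists 0 => n; rewrite sqnorm0].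
move=> a u v /set_mem[uW [Mu uM]] /set_mem[vW [Mv vM]]; apply: compatible_boundedP => [n|].
  by rewrite /= WL uW vW.
exists (2 * ((Re a ^+ 2 + Im a ^+ 2) * Mu) + 2 * Mv) => n /=.
apply: le_trans (sqnormD_le _ _) _; rewrite sqnormZ.
by apply: lerD; rewrite ler_pM2l // ?ler_wpM2l ?addr_ge0 ?sqr_ge0.
Qed.

Record invlim := InvLim { invlim_seq :> nat -> H; invlim_seqP : invlim_seq \in compatible_bounded }.

HB.instance Definition _ := [isSub for invlim_seq].
HB.instance Definition _ := [Choice of invlim by <:].
HB.instance Definition _ := GRing.isSubmodClosed.Build _ _ compatible_bounded
  compatible_bounded_submod_closed.
HB.instance Definition _ := [SubChoice_isSubLmodule of invlim by <:].

Implicit Types u v : invlim.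

Lemma invlimW u n : W (u n.+1) = u n.
Proof. by have /set_mem[] := invlim_seqP u. Qed.

Lemma invlim_bounded u : exists M : R, forall n, sqnorm (u n) <= M.
Proof. by have /set_mem[] := invlim_seqP u. Qed.

Lemma invlimP u v : u =1 v -> u = v.
Proof. by move=> uv; apply/val_inj/funext. Qed.

Lemma invlim_iterW u j n : iter j W (u (n + j)%N) = u n.
Proof. by elim: j n => [|j ih] n; rewrite ?addn0 // iterSr addnS invlimW ih. Qed.

Lemma invlim_sqnorm_nondecreasing u : nondecreasing_seq (fun n => sqnorm (u n)).
Proof. by apply/nondecreasing_seqP => n; rewrite -invlimW (sqnorm_coisometric_le WS). Qed.

Definition invlim_sqnorm u : R := sup (range (fun n => sqnorm (u n))).

Lemma invlim_sqnorm_has_sup u : has_sup (range (fun n => sqnorm (u n))).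
Proof.
have [M uM] := invlim_bounded u.
by split; [exists (sqnorm (u 0%N)), 0%N | exists M => _ [n _ <-]].
Qed.

Lemma invlim_sqnorm_ge u n : sqnorm (u n) <= invlim_sqnorm u.
Proof. by apply: sup_upper_bound; [exact: invlim_sqnorm_has_sup | exists n]. Qed.

Lemma invlim_sqnorm_le u M : (forall n, sqnorm (u n) <= M) -> invlim_sqnorm u <= M.
Proof.
by move=> uM; apply: ge_sup => [|_ [n _ <-]]; [exists (sqnorm (u 0%N)), 0%N | exact: uM].
Qed.

Lemma invlim_sqnorm_cvg u : (fun n => sqnorm (u n)) @ \oo --> invlim_sqnorm u.
Proof.
apply: nondecreasing_cvgn; first exact: invlim_sqnorm_nondecreasing.
by have [M uM] := invlim_bounded u; exists M => _ [n _ <-].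
Qed.

(* The limit exists by polarization: each [sqnorm (u n + c *: v n)] is
   nondecreasing and bounded. *)
Definition invlim_ip u v : R[i] := climn (fun n => << u n, v n >>).

Lemma invlim_ip_cvg u v : ccvg (fun n => << u n, v n >>) (invlim_ip u v).
Proof.
suff [l uvl] : exists l, ccvg (fun n => << u n, v n >>) l by rewrite /invlim_ip (climn_eq uvl).
pose N w := invlim_sqnorm w.
exists (Complex (4^-1 * (N (u + v) - N (u - v)))
                (4^-1 * (N (u + 'i%C *: v) - N (u - 'i%C *: v)))); split => /=.
  under eq_cvg do rewrite Re_ip_polarization.
  by apply: cvgM; [exact: cvg_cst | apply: cvgB; exact: invlim_sqnorm_cvg].
under eq_cvg do rewrite Im_ip_polarization.
by apply: cvgM; [exact: cvg_cst | apply: cvgB; exact: invlim_sqnorm_cvg].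
Qed.

Lemma invlim_ip_unique u v l : ccvg (fun n => << u n, v n >>) l -> invlim_ip u v = l.
Proof. exact: climn_eq. Qed.

Lemma invlim_ipDl a u v w : invlim_ip (a *: u + v) w = a * invlim_ip u w + invlim_ip v w.
Proof.
apply: invlim_ip_unique; rewrite (eq_ccvg _ (fun n => hinnerDl a (u n) (v n) (w n))).
by apply: ccvgD; [apply: ccvgMl |]; exact: invlim_ip_cvg.
Qed.

Lemma invlim_ipC u v : invlim_ip v u = (invlim_ip u v)^*.
Proof.
apply: invlim_ip_unique; rewrite (eq_ccvg _ (fun n => ipC (u n) (v n))).
exact/ccvgJ/invlim_ip_cvg.
Qed.

Lemma invlim_ipxx u : invlim_ip u u = (invlim_sqnorm u)%:C%C.
Proof.
apply: invlim_ip_unique; rewrite (eq_ccvg _ (fun n => ipxx (u n))).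
exact/ccvg_real/invlim_sqnorm_cvg.
Qed.

Lemma invlim_sqnorm_ge0 u : 0 <= invlim_sqnorm u.
Proof. exact: le_trans (sqnorm_ge0 _) (invlim_sqnorm_ge u 0). Qed.

Lemma invlim_ip_ge0 u : 0 <= invlim_ip u u.
Proof. by rewrite invlim_ipxx ler0c invlim_sqnorm_ge0. Qed.

Lemma invlim_ip_eq0 u : invlim_ip u u = 0 -> u = 0.
Proof.
rewrite invlim_ipxx => -[u0]; apply: invlimP => n; apply: sqnorm_eq0.
by apply/eqP; rewrite eq_le sqnorm_ge0 andbT -u0 invlim_sqnorm_ge.
Qed.

Definition invlim_cauchy (u : nat -> invlim) := forall e : R, 0 < e ->
  exists N, forall m n, (N <= m)%N -> (N <= n)%N -> invlim_sqnorm (u m - u n) < e.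

Lemma invlim_cauchy_coord (u : nat -> invlim) : invlim_cauchy u ->
  {l : nat -> H & forall i, hcvg (fun m => u m i) (l i)}.
Proof.
move=> uC; apply: (@choice _ _ (fun i li => hcvg (fun m => u m i) li)) => i.
apply: hcvg_cauchy => e /uC [N uN]; exists N => m n Nm Nn.
exact: le_lt_trans (invlim_sqnorm_ge (u m - u n) i) (uN m n Nm Nn).
Qed.

Section CauchyLimit.
Variables (u : nat -> invlim) (l : nat -> H).
Hypotheses (uC : invlim_cauchy u) (ul : forall i, hcvg (fun m => u m i) (l i)).

Lemma invlim_cauchy_unif e : 0 < e ->
  exists N, forall n i, (N <= n)%N -> sqnorm (u n i - l i) < e.
Proof.
move=> e0; have /uC [N uN] : 0 < e / 4 by rewrite divr_gt0.
exists N => n i Nn; have /(hcvgP (ul i)) [M uM] : 0 < e / 8 by rewrite divr_gt0.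
have Nm := leq_maxl N M; have Mm := leq_maxr N M; set m := maxn N M in Nm Mm.
have := le_lt_trans (invlim_sqnorm_ge (u n - u m) i) (uN n m Nn Nm).
have := uM m Mm; have := sqnormB_le (u n i) (u m i) (l i); rewrite /=; lra.
Qed.

Lemma invlim_cauchy_limitP : l \in compatible_bounded.
Proof.
apply: compatible_boundedP => [i|].
  apply: hcvg_unique (ul i); rewrite -(funext (fun m => invlimW (u m) i)).
  apply: (hcvg_bounded (M := 1) WL) (ul i.+1) => x.
  by rewrite mul1r (sqnorm_coisometric_le WS).
have [N uN] := invlim_cauchy_unif ltr01; exists (2 + 2 * invlim_sqnorm (u N)) => i.
have := sqnormD_le (l i - u N i) (u N i); rewrite subrK sqnormBC.
have := uN N i (leqnn N); have := invlim_sqnorm_ge (u N) i; lra.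
Qed.

End CauchyLimit.

Lemma invlim_complete (u : nat -> invlim) :
  (forall eps : R[i], 0 < eps -> exists N, forall m n, (N <= m)%N -> (N <= n)%N ->
     invlim_ip (u m - u n) (u m - u n) < eps) ->
  exists l, forall eps : R[i], 0 < eps -> exists N, forall n, (N <= n)%N ->
     invlim_ip (u n - l) (u n - l) < eps.
Proof.
move=> uC; have uR : invlim_cauchy u.
  move=> e e0; have /uC [N uN] : 0 < e%:C%C :> R[i] by rewrite ltcR.
  by exists N => m n Nm Nn; have := uN m n Nm Nn; rewrite invlim_ipxx ltcR.
have [l ul] := invlim_cauchy_coord uR; pose L := InvLim (invlim_cauchy_limitP uR ul).
exists L => eps; rewrite gt0_complexE => /andP[/eqP Im0 e0].
have /(invlim_cauchy_unif uR ul) [N uN] : 0 < Re eps / 2 by rewrite divr_gt0.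
exists N => n Nn; rewrite invlim_ipxx ltcE Im0 eqxx /=.
have : invlim_sqnorm (u n - L) <= Re eps / 2.
  by apply: invlim_sqnorm_le => i; exact/ltW/uN.
lra.
Qed.

Definition invlim_hilbert : hilbert R[i] :=
  Hilbert invlim_ipDl invlim_ipC invlim_ip_ge0 invlim_ip_eq0 invlim_complete.

End InverseLimit.

Section Shift.
Variables (R : realType) (H : hilbert R[i]) (W S : H -> H).
Hypothesis WS : coisometric W S.
Local Notation K := (invlim_hilbert WS).
Local Notation "<< x , y >>" := (hinner H x y).

Let WSadj : adjoint W S := coisometric_adjoint WS.
Let SWadj : adjoint S W := adjoint_sym WSadj.

Lemma sqnorm_invlim (u : K) : sqnorm u = invlim_sqnorm u.
Proof. by rewrite /sqnorm (invlim_ipxx WS u : hinner K u u = _). Qed.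

Lemma embed_subproof x : (fun n => iter n S x) \in compatible_bounded W.
Proof.
apply: compatible_boundedP => [n|]; first exact: (coisometricK WS).
by exists (sqnorm x) => n; rewrite (sqnorm_coisometric_adj (coisometric_iter n WS)).
Qed.

Definition embed x : K := InvLim (embed_subproof x).

Definition head (u : K) : H := u 0%N.

Lemma hinner_invlim_unique (u v : K) l :
  ccvg (fun n => << u n, v n >>) l -> hinner K u v = l.
Proof. exact: invlim_ip_unique. Qed.

Lemma sqnorm_head_le (u : K) : sqnorm (head u) <= sqnorm u.
Proof. by rewrite sqnorm_invlim; exact: invlim_sqnorm_ge. Qed.

Lemma embedE x n : embed x n = iter n S x. Proof. by []. Qed.

Lemma invlim_iterW0 (u : K) n : iter n W (u n) = u 0%N.
Proof. by have := invlim_iterW u n 0; rewrite add0n. Qed.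

Lemma head_embed_adjoint : adjoint head embed.
Proof.
move=> u x; apply/esym; apply: hinner_invlim_unique.
have -> : (fun n => << u n, embed x n >>) = fun=> << head u, x >>.
  by apply/funext => n; rewrite embedE -(adjoint_iter n WSadj) invlim_iterW0.
exact: ccvg_cst.
Qed.

Lemma coisometric_head_embed : coisometric head embed.
Proof. by split; [exact: head_embed_adjoint | move=> x]. Qed.

Lemma shift_subproof (u : K) :
  (fun n => if n is m.+1 then u m else W (u 0%N)) \in compatible_bounded W.
Proof.
have [M uM] := invlim_bounded u.
apply: compatible_boundedP => [[|n]|]; rewrite /= ?invlimW //.
exists M => -[|n] //; exact: le_trans (sqnorm_coisometric_le WS _) (uM 0%N).
Qed.

Lemma unshift_subproof (u : K) : (fun n => u n.+1) \in compatible_bounded W.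
Proof.
have [M uM] := invlim_bounded u.
by apply: compatible_boundedP => [n|]; [exact: invlimW | exists M].
Qed.

Definition shift (u : K) : K := InvLim (shift_subproof u).
Definition unshift (u : K) : K := InvLim (unshift_subproof u).

Lemma shiftK : cancel unshift shift.
Proof. by move=> u; apply: invlimP => -[|n] //=; rewrite invlimW. Qed.

Lemma unshiftK : cancel shift unshift.
Proof. by move=> u; apply: invlimP. Qed.

Lemma shift_adjoint : adjoint shift unshift.
Proof.
move=> u v; apply: hinner_invlim_unique; rewrite -ccvg_shiftS.
exact: (invlim_ip_cvg WS u (unshift v)).
Qed.

Lemma unitary_pair_shift : unitary_pair shift unshift.
Proof. by split; [exact: shift_adjoint | split; [exact: shiftK | exact: unshiftK]]. Qed.

Lemma unshift_embed x : unshift (embed x) = embed (S x).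
Proof. by apply: invlimP => n; rewrite /= -iterSr. Qed.

Lemma head_iter_unshift n (u : K) : head (iter n unshift u) = u n.
Proof.
suff iterE i : iter n unshift u i = u (i + n)%N by rewrite /head iterE.
by elim: n i => [|n ih] i; rewrite ?addn0 // iterS /= ih addnS.
Qed.

Lemma hcvg_embed_head (T Ti : K -> K) (u : K) :
  unitary_pair T Ti -> (forall n, sqnorm (head (iter n T u)) = sqnorm (u n)) ->
  hcvg (fun n => iter n Ti (embed (head (iter n T u)))) u.
Proof.
move=> TTi Tu; have dist n : sqnorm (iter n Ti (embed (head (iter n T u))) - u) =
    invlim_sqnorm u - sqnorm (u n).
  have TTin := unitary_pair_iter TTi n; have [_ [_ TK]] := TTin.
  rewrite -{2}(TK u) -(linB (unitary_pair_linear (unitary_pair_sym TTin))).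
  rewrite (sqnorm_unitary_pair (unitary_pair_sym TTin)) sqnormBC.
  rewrite (sqnorm_coisometric_defect coisometric_head_embed) Tu.
  by rewrite (sqnorm_unitary_pair TTin) sqnorm_invlim.
have : (fun n => invlim_sqnorm u - sqnorm (u n)) @ \oo --> invlim_sqnorm u - invlim_sqnorm u.
  by apply: cvgB; [exact: cvg_cst | apply: (invlim_sqnorm_cvg WS)].
by rewrite subrr /hcvg (eq_cvg _ _ dist).
Qed.

Lemma shift_approx (v : K) : hcvg (fun n => iter n shift (embed (v n))) v.
Proof.
have := hcvg_embed_head (unitary_pair_sym unitary_pair_shift) (u := v).
by under eq_fun do rewrite head_iter_unshift; apply => n; rewrite head_iter_unshift.
Qed.

Lemma sqnorm_oplus_scalar_coord (Q : H -> H) c (w : K) i :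
  (forall x, sqnorm (Q x) = sqnorm x) -> `|c| = 1 ->
  sqnorm (oplus_scalar head embed Q c w i) = sqnorm (w i).
Proof.
move=> Qiso /normc1_ReIm c1; have WSi := coisometric_iter i WS.
have orth a : << iter i S a, w i - iter i S (w 0%N) >> = 0.
  rewrite (adjoint_iter i SWadj) (linB (iter_linear i (coisometric_linear WS))).
  by rewrite invlim_iterW0 (coisometricK WSi) subrr ip0r.
have -> : oplus_scalar head embed Q c w i = iter i S (Q (w 0%N)) + c *: (w i - iter i S (w 0%N)).
  by [].
rewrite sqnormD sqnormZ ipZr orth mulr0 /= mulr0 addr0 c1 mul1r.
rewrite (sqnorm_coisometric_adj WSi) Qiso -(invlim_iterW0 w i).
rewrite (sqnorm_coisometric_defect WSi); lra.
Qed.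

End Shift.

(** * Lifting a co-isometry intertwined with the extended one *)

Section Lifting.
Variables (R : realType) (H : hilbert R[i]) (W S A B Q Qs : H -> H) (q : R[i]).
Hypotheses (WS : coisometric W S) (AB : coisometric A B) (QQs : unitary_pair Q Qs).
Hypotheses (q1 : `|q| = 1) (WAQ : forall x, W (A x) = A (W (Q x))).
Local Notation K := (invlim_hilbert WS).
Local Notation embed := (embed WS).
Local Notation head := (@head _ _ _ _ WS).
Local Notation shift := (@shift _ _ _ _ WS).
Local Notation unshift := (@unshift _ _ _ _ WS).
Local Notation "<< x , y >>" := (hinner H x y).

Local Notation Qt := (oplus_scalar head embed Q q).
Local Notation Qti := (oplus_scalar head embed Qs q^*).

Let unitary_pair_Qt : unitary_pair Qt Qti :=
  unitary_pair_oplus_scalar (coisometric_head_embed WS) QQs q1.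

Definition lift_step : K -> K := Qti \o unshift.
Definition lift_unstep : K -> K := shift \o Qt.

Lemma unitary_pair_lift_step : unitary_pair lift_step lift_unstep.
Proof.
exact: (unitary_pair_comp (unitary_pair_sym (unitary_pair_shift WS))
                          (unitary_pair_sym unitary_pair_Qt)).
Qed.

Let iter_step_pair n := unitary_pair_iter unitary_pair_lift_step n.

Lemma head_lift_step u : head (lift_step u) = Qs (u 1%N).
Proof. exact: (Js_oplus_scalar (coisometric_head_embed WS)). Qed.

Lemma sqnorm_lift_step_coord u i : sqnorm (lift_step u i) = sqnorm (u i.+1).
Proof.
have Qs_iso := sqnorm_unitary_pair (unitary_pair_sym QQs).
by rewrite (sqnorm_oplus_scalar_coord (unshift u) i Qs_iso) // norm_conjC.
Qed.

Lemma sqnorm_lift_coord_le (u : K) n : sqnorm (A (head (iter n lift_step u))) <= sqnorm u.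
Proof.
apply: le_trans (sqnorm_coisometric_le AB _) _.
by rewrite -(sqnorm_unitary_pair (iter_step_pair n) u) sqnorm_head_le.
Qed.

Lemma lift_subproof (u : K) : (fun n => A (head (iter n lift_step u))) \in compatible_bounded W.
Proof.
have [_ [QsK _]] := QQs.
apply: compatible_boundedP => [n|]; first by rewrite iterS WAQ head_lift_step QsK invlimW.
by exists (sqnorm u); exact: sqnorm_lift_coord_le.
Qed.

Definition lift (u : K) : K := InvLim (lift_subproof u).

Lemma lift_linear : linear lift.
Proof.
move=> a u v; apply: invlimP => n.
exact: (linear_comp (coisometric_linear AB) (linear_comp
  (coisometric_linear (coisometric_head_embed WS)) (unitary_pair_linear (iter_step_pair n))) a u v).
Qed.

Lemma sqnorm_lift_le u : sqnorm (lift u) <= sqnorm u.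
Proof. by rewrite [leLHS]sqnorm_invlim; apply: invlim_sqnorm_le; exact: sqnorm_lift_coord_le. Qed.

Lemma shift_lift u : shift (lift u) = lift (lift_unstep u).
Proof.
have [_ [_ QK]] := unitary_pair_Qt.
apply: invlimP => -[|n].
  change (W (A (head u)) = A (W (head (Qt u)))).
  by rewrite WAQ (Js_oplus_scalar (coisometric_head_embed WS)).
change (A (head (iter n lift_step u)) = A (head (iter n.+1 lift_step (lift_unstep u)))).
by rewrite iterSr /lift_step /= unshiftK QK.
Qed.

Lemma lift_iter_unstep n u : lift (iter n lift_unstep u) = iter n shift (lift u).
Proof. by elim: n => [//|n ih]; rewrite !iterS -ih shift_lift. Qed.

Lemma B_S y : B (S y) = Qs (S (B y)).
Proof.
have [ABadj _] := AB; have [WSadj _] := WS; have [QQsadj _] := QQs.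
by apply: ipr_inj => z; rewrite -ABadj -WSadj WAQ ABadj WSadj QQsadj.
Qed.

Lemma lift_step_embed x : lift_step (embed x) = embed (Qs (S x)).
Proof. by rewrite /lift_step /= unshift_embed (oplus_scalar_J (coisometric_head_embed WS)). Qed.

Lemma iter_lift_step_embedB n x : iter n lift_step (embed (B x)) = embed (B (iter n S x)).
Proof. by elim: n => [//|n ih]; rewrite !iterS ih lift_step_embed B_S. Qed.

Lemma lift_embedB x : lift (embed (B x)) = embed x.
Proof.
have [_ BK] := AB; apply: invlimP => n.
by rewrite /= iter_lift_step_embedB BK.
Qed.

Definition lift_adj_seq (v : K) n : K := iter n lift_unstep (embed (B (v n))).

Lemma lift_adj_seq_dist (v : K) m j :
  sqnorm (lift_adj_seq v (m + j) - lift_adj_seq v m) = sqnorm (v (m + j)%N) - sqnorm (v m).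
Proof.
have pair := iter_step_pair (m + j); have [_ [_ unstepK]] := iter_step_pair j.
rewrite /lift_adj_seq -(unstepK (embed (B (v m)))) -iterD iter_lift_step_embedB.
rewrite -(linB (unitary_pair_linear (unitary_pair_sym pair))).
rewrite (sqnorm_unitary_pair (unitary_pair_sym pair)).
rewrite -(linB (coisometric_linear_adj (coisometric_head_embed WS))).
rewrite (sqnorm_coisometric_adj (coisometric_head_embed WS)).
rewrite -(linB (coisometric_linear_adj AB)) (sqnorm_coisometric_adj AB).
by rewrite -(invlim_iterW v j m) (sqnorm_coisometric_defect (coisometric_iter j WS)).
Qed.

Lemma lift_adj_seq_cauchy (v : K) e : 0 < e -> exists N, forall m n,
  (N <= m)%N -> (N <= n)%N -> sqnorm (lift_adj_seq v m - lift_adj_seq v n) < e.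
Proof.
move=> e0; have [N _ vN] := cvgr_dist_lt _ _ (invlim_sqnorm_cvg WS (u := v)) _ e0.
exists N => m n Nm Nn; wlog mn : m n Nm Nn / (m <= n)%N.
  move=> wlg; case: (leqP m n) => [|/ltnW] mn; first exact: wlg.
  by rewrite sqnormBC; exact: wlg.
rewrite sqnormBC -(subnKC mn) lift_adj_seq_dist (subnKC mn).
have := invlim_sqnorm_ge v n; have := le_lt_trans (ler_norm _) (vN m Nm); rewrite /=; lra.
Qed.

Definition lift_adj (v : K) : K := projT1 (cid (hcvg_cauchy (lift_adj_seq_cauchy v))).

Lemma lift_adj_seq_cvg v : hcvg (lift_adj_seq v) (lift_adj v).
Proof. exact: projT2 (cid _). Qed.

Lemma lift_adjoint : adjoint lift lift_adj.
Proof.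
have [ABadj _] := AB; have [Hadj _] := coisometric_head_embed WS.
move=> u v; apply: hinner_invlim_unique.
rewrite (eq_ccvg _ (fun n => _ : << lift u n, v n >> = hinner K u (lift_adj_seq v n))).
  exact: hcvg_ipr (lift_adj_seq_cvg v).
move=> n; rewrite /= ABadj -/(head (iter n lift_step u)) Hadj.
by have [adj _] := iter_step_pair n; rewrite adj.
Qed.

(* [lift (lift_adj v)] is the limit of [shift^n (embed (v n))], that is [v]. *)
Lemma lift_adjK : cancel lift_adj lift.
Proof.
move=> v; apply/esym/(hcvg_unique (shift_approx v)).
have -> : (fun n => iter n shift (embed (v n))) = fun n => lift (lift_adj_seq v n).
  by apply/funext => n; rewrite /lift_adj_seq lift_iter_unstep lift_embedB.
apply: (hcvg_bounded (M := 1) lift_linear) (lift_adj_seq_cvg v) => u.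
by rewrite mul1r sqnorm_lift_le.
Qed.

Lemma liftK : cancel A B -> cancel lift lift_adj.
Proof.
move=> AK u; apply: (hcvg_unique (lift_adj_seq_cvg (lift u))).
have -> : lift_adj_seq (lift u) = fun n => iter n lift_unstep (embed (head (iter n lift_step u))).
  by apply/funext => n; rewrite /lift_adj_seq /= AK.
apply: (hcvg_embed_head unitary_pair_lift_step) => n.
by elim: n u => [//|n ih] u; rewrite iterSr ih sqnorm_lift_step_coord.
Qed.

End Lifting.

(** * The two-step dilation *)

Lemma intertwining_unitary_lifting (R : realType) (H : hilbert R[i]) (W S A B Q Qs : H -> H)
    (q : R[i]) :
  coisometric W S -> coisometric A B -> unitary_pair Q Qs -> `|q| = 1 ->
  (forall x, W (A x) = A (W (Q x))) ->
  exists (K : hilbert R[i]) (Js : K -> H) (J : H -> K) (U V A' B' : K -> K),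
    [/\ coisometric Js J, unitary_pair U V, coisometric A' B' & cancel A B -> cancel A' B'] /\
    [/\ forall k, Js (U k) = W (Js k), forall k, Js (A' k) = A (Js k) &
        forall k, U (A' k) = A' (U (oplus_scalar Js J Q q k))].
Proof.
move=> WS AB QQs q1 WAQ.
exists (invlim_hilbert WS), (head (WS := WS)), (embed WS), (shift (WS := WS)),
  (unshift (WS := WS)), (lift (WS := WS) AB QQs q1 WAQ), (lift_adj (WS := WS) AB QQs q1 WAQ).
split; split => //.
- exact: coisometric_head_embed.
- exact: unitary_pair_shift.
- by split; [exact: lift_adjoint | exact: lift_adjK].
- exact: liftK.
- exact: shift_lift.
Qed.

Lemma twisted_unitary_liftings (R : realType) (H : hilbert R[i]) (W1 S1 W2 S2 Q Qs : H -> H)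
    (q : R[i]) :
  coisometric W1 S1 -> coisometric W2 S2 -> unitary_pair Q Qs -> `|q| = 1 ->
  (forall x, W2 (W1 x) = W1 (W2 (Q x))) ->
  exists (K : hilbert R[i]) (Js : K -> H) (J : H -> K) (U1 V1 U2 V2 : K -> K),
    [/\ coisometric Js J, unitary_pair U1 V1, unitary_pair U2 V2,
        forall k, Js (U1 k) = W1 (Js k) & forall k, Js (U2 k) = W2 (Js k)] /\
    forall k, U2 (U1 k) = U1 (U2 (oplus_scalar Js J Q q k)).
Proof.
move=> WS1 WS2 QQs q1 W21; have [_ [QK _]] := QQs.
have W12 x : W1 (W2 x) = W2 (W1 (Qs x)) by rewrite W21 QK.
have qJ1 : `|q^*| = 1 by rewrite norm_conjC.
case: (intertwining_unitary_lifting WS1 WS2 (unitary_pair_sym QQs) qJ1 W12)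
  => K1 [Js1 [J1 [U1 [V1 [W2' [S2' [[JsJ1 UV1 WS2' _] [JsU1 JsW2 UW2]]]]]]]].
have QQs1 := unitary_pair_oplus_scalar JsJ1 QQs q1; have [_ [_ Q1K]] := QQs1.
have W2U1 k : W2' (U1 k) = U1 (W2' (oplus_scalar Js1 J1 Q q k)) by rewrite UW2 Q1K.
case: (intertwining_unitary_lifting WS2' (unitary_pair_coisometric UV1) QQs1 q1 W2U1)
  => K [Js2 [J2 [U2 [V2 [U1' [V1' [[JsJ2 UV2 [U1adj V1K] U1K] [JsU2 JsU1' U21]]]]]]]].
exists K, (Js1 \o Js2), (J2 \o J1), U1', V1', U2, V2; split; last first.
  by move=> k; rewrite U21 (oplus_scalar_comp _ _ _ JsJ1 JsJ2).
split.
- exact: coisometric_comp JsJ1 JsJ2.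
- by split; [|split => //; apply: U1K; case: UV1 => _ []].
- exact: UV2.
- by move=> k /=; rewrite JsU1' JsU1.
- by move=> k /=; rewrite JsU2 JsW2.
Qed.

Section Intertwining.
Variables (R : realType) (H K : hilbert R[i]) (Js : K -> H) (J : H -> K).
Hypothesis JsJ : coisometric Js J.

Lemma hembedding_coisometric : hembedding J.
Proof. by split; [exact: coisometric_linear_adj JsJ | exact: coisometric_ip JsJ]. Qed.

Lemma iter_intertwined (U : K -> K) (T : H -> H) n k :
  (forall k, Js (U k) = T (Js k)) -> Js (iter n U k) = iter n T (Js k).
Proof. by move=> UT; elim: n => [//|n ih]; rewrite !iterS UT ih. Qed.

Lemma ip_intertwined (U : K -> K) (T : H -> H) x y :
  (forall k, Js (U k) = T (Js k)) -> hinner K (U (J x)) (J y) = hinner H (T x) y.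
Proof.
have [Jsadj JsK] := JsJ.
by move=> UT; rewrite -Jsadj UT JsK.
Qed.

Lemma lifting_intertwined (U : K -> K) (T : H -> H) :
  linear T -> (forall k, Js (U k) = T (Js k)) -> lifting J U T.
Proof.
move=> TL UT; split => [z /(coisometric_orthE JsJ) z0|x y]; last exact: ip_intertwined.
by apply/(coisometric_orthE JsJ); rewrite UT z0 (lin0 TL).
Qed.

Lemma ip_iter_intertwined (U1 U2 : K -> K) (T1 T2 : H -> H) n m x y :
  (forall k, Js (U1 k) = T1 (Js k)) -> (forall k, Js (U2 k) = T2 (Js k)) ->
  hinner K (iter n U1 (iter m U2 (J x))) (J y) = hinner H (iter n T1 (iter m T2 x)) y.
Proof.
move=> U1T1 U2T2.
have UT k : Js ((iter n U1 \o iter m U2) k) = (iter n T1 \o iter m T2) (Js k).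
  by rewrite /= (iter_intertwined _ _ U1T1) (iter_intertwined _ _ U2T2).
exact: (ip_intertwined x y UT).
Qed.

End Intertwining.

Theorem mainTheorem12 (R : realType) (H : hilbert R[i]) (W1 W2 Q : H -> H) :
  is_bounded_op W1 -> is_bounded_op W2 -> is_bounded_op Q ->
  coisometry W1 -> coisometry W2 -> unitary Q ->
  (forall x : H, W2 (W1 x) = W1 (W2 (Q x))) ->
  forall q : R[i], `|q| = 1 ->
  exists (K : hilbert R[i]) (J : H -> K) (Qbar U1 U2 : K -> K),
    hembedding J /\
    is_bounded_op Qbar /\ is_bounded_op U1 /\ is_bounded_op U2 /\
    unitary Qbar /\ unitary U1 /\ unitary U2 /\
    (* Qbar = Q ⊕ q I on K ⊖ H (so H reduces Qbar and Qbar|_H = Q) *)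
    (forall x : H, Qbar (J x) = J (Q x)) /\
    (forall z : K, horth J z -> Qbar z = q *: z) /\
    (* (i) *)
    (forall z : K, U2 (U1 z) = U1 (U2 (Qbar z))) /\
    (* (ii) *)
    lifting J U1 W1 /\ lifting J U2 W2 /\
    (forall (n m : nat) (x y : H),
        hinner K (iter n U1 (iter m U2 (J x))) (J y)
        = hinner H (iter n W1 (iter m W2 x)) y) /\
    (forall (n m : nat) (x y : H),
        hinner K (iter n U2 (iter m U1 (J x))) (J y)
        = hinner H (iter n W2 (iter m W1 x)) y).
Proof.
move=> _ _ _ [S1 WS1] [S2 WS2] [Qs QQs] W21 q q1.
case: (twisted_unitary_liftings WS1 WS2 QQs q1 W21)
  => K [Js [J [U1 [V1 [U2 [V2 [[JsJ UV1 UV2 JsU1 JsU2] U21]]]]]]].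
have QQbar := unitary_pair_oplus_scalar JsJ QQs q1.
exists K, J, (oplus_scalar Js J Q q), U1, U2.
split; first exact: hembedding_coisometric JsJ.
split; first exact: unitary_pair_bounded QQbar.
split; first exact: unitary_pair_bounded UV1.
split; first exact: unitary_pair_bounded UV2.
split; first by exists (oplus_scalar Js J Qs q^*).
split; first by exists V1.
split; first by exists V2.
split; first exact: (oplus_scalar_J JsJ).
split.
  by move=> z /(coisometric_orthE JsJ); exact: (oplus_scalar_orth JsJ q (unitary_pair_linear QQs)).
split; first exact: U21.
split; first exact: (lifting_intertwined JsJ (coisometric_linear WS1) JsU1).
split; first exact: (lifting_intertwined JsJ (coisometric_linear WS2) JsU2).
by split=> n m x y; exact: (ip_iter_intertwined JsJ).
Qed.
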